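(* Let $\pi(m)=(1/2)^m$ for $m\in\mathbb{N}^+$ (and $0$ otherwise), and let the proposal be $q(m,\{m+1\})=\theta=1-q(m,\{m-1\})$ for $m\in\mathbb{Z}$, $\theta\in(0,1)$. For $m\in\mathbb{N}^+$ and $N\in\mathbb{N}^+$ let the weights be $$W_{m,N}=\frac{b_m-\varepsilon_m}{N}\,\mathrm{Bin}(N,s_m)+\varepsilon_m,$$ where $b_m>1$, $\varepsilon_m\in(0,1]$, $\mathrm{Bin}(N,s)$ is a binomial random variable with parameters $N$ and $s$, and $s_m=\frac{1-\varepsilon_m}{b_m-\varepsilon_m}$ so that $\mathbb{E}[W_{m,N}]=1$. Suppose $b_m\to\infty$, $\varepsilon_m\to0$ as $m\to\infty$ and $\lim_{m\to\infty}\frac{\varepsilon_{m-1}}{\varepsilon_m}=l$ with $l\in\mathbb{R}^+\cup\{+\infty\}$. Then for every $N\in\mathbb{N}^+$ the chain generated by the noisy kernel $\tilde P_N$ is geometrically ergodic.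
   Context: Noisy Metropolis–Hastings kernel $\tilde P_N$: from state $m$, propose $Y\sim q(m,\cdot)$, draw independent weights $W\sim Q_{m,N}$, $U\sim Q_{Y,N}$ (the laws of $W_{m,N}$, $W_{Y,N}$), and move to $Y$ with probability $\min\{1,\frac{\pi(Y)q(Y,m)}{\pi(m)q(m,Y)}\cdot\frac{U}{W}\}$, otherwise stay at $m$ (proposals outside $\mathbb{N}^+$ are rejected). A $\varphi$-irreducible aperiodic chain with kernel $K$ is geometrically ergodic if it has an invariant probability distribution $\mu$ and there exist finite $V\ge1$, $\tau<1$, $R<\infty$ with $\|K^n(x,\cdot)-\mu\|_{TV}\le RV(x)\tau^n$ for all $x,n$. *)

From Stdlib Require Import Reals Arith.
From Stdlib Require Binomial.
From Coquelicot Require Import Coquelicot.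
Open Scope R_scope.

Definition binomR (N k : nat) : R := Binomial.C N k.

Fixpoint kpow (K : nat -> nat -> R) (n : nat) (x y : nat) : R :=
  match n with
  | O => if Nat.eqb x y then 1 else 0
  | S n' => Series (fun z => kpow K n' x z * K z y)
  end.

(* phi-irreducible (phi a nonzero measure on nat, given by its point masses;
   phi(A)>0 implies L(x,A) > 0 for all x, with first-hitting times n >= 1),
   aperiodic (the states charged by phi, which all communicate, have period 1),
   with an invariant probability mu and geometric convergence in total variation:
   sup_A |K^n(x,A) - mu(A)| <= R V(x) tau^n. *)
Definition geometrically_ergodic (K : nat -> nat -> R) : Prop :=
  exists phi : nat -> R,
    (forall y, 0 <= phi y) /\ (exists y, 0 < phi y) /\
    (forall x y, 0 < phi y -> exists n, (1 <= n)%nat /\ 0 < kpow K n x y) /\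
    (forall y, 0 < phi y -> forall d : nat, (2 <= d)%nat ->
        exists n, (1 <= n)%nat /\ 0 < kpow K n y y /\ Nat.modulo n d <> 0%nat) /\
  exists mu : nat -> R,
    (forall y, 0 <= mu y) /\ is_series mu 1 /\
    (forall y, is_series (fun x => mu x * K x y) (mu y)) /\
  exists (V : nat -> R) (tau Rc : R),
    (forall x, 1 <= V x) /\ 0 <= tau /\ tau < 1 /\
    forall (x n : nat) (A : nat -> bool),
      Rabs (Series (fun y => if A y then kpow K n x y - mu y else 0))
        <= Rc * V x * tau ^ n.

Definition pi_target (m : nat) : R := if Nat.leb 1 m then (1/2) ^ m else 0.

Definition qprop (theta : R) (m y : nat) : R :=
  if Nat.eqb y (S m) then theta
  else if Nat.eqb m (S y) then 1 - theta else 0.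

Definition s_par (b eps : nat -> R) (m : nat) : R := (1 - eps m) / (b m - eps m).

(* W_{m,N} = (b_m - eps_m)/N * Bin(N, s_m) + eps_m : value when Bin(N,s_m) = k ... *)
Definition wval (b eps : nat -> R) (N m k : nat) : R :=
  (b m - eps m) / INR N * INR k + eps m.

(* ... and the probability P(Bin(N, s_m) = k) *)
Definition wprob (b eps : nat -> R) (N m k : nat) : R :=
  binomR N k * s_par b eps m ^ k * (1 - s_par b eps m) ^ (N - k).

(* acceptance probability of a move m -> y:
   E[ min{1, pi(y) q(y,m) / (pi(m) q(m,y)) * U / W} ],
   W ~ Q_{m,N}, U ~ Q_{y,N} independent *)
Definition accept (theta : R) (b eps : nat -> R) (N m y : nat) : R :=
  sum_f_R0 (fun k =>
    sum_f_R0 (fun j =>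
      wprob b eps N m k * wprob b eps N y j *
      Rmin 1 (pi_target y * qprop theta y m / (pi_target m * qprop theta m y)
              * (wval b eps N y j / wval b eps N m k))) N) N.

(* noisy MH kernel on N^+ (m, y >= 1); proposals to 0 are rejected *)
Definition noisy_kernel_orig (theta : R) (b eps : nat -> R) (N m y : nat) : R :=
  let up := qprop theta m (S m) * accept theta b eps N m (S m) in
  let down := if Nat.leb 2 m
              then qprop theta m (pred m) * accept theta b eps N m (pred m)
              else 0 in
  if Nat.eqb y (S m) then up
  else if andb (Nat.leb 2 m) (Nat.eqb y (pred m)) then down
  else if Nat.eqb y m then 1 - up - down
  else 0.

(* the same kernel transported to nat: state x : nat stands for m = x + 1 *)
Definition noisy_kernel (theta : R) (b eps : nat -> R) (N : nat) (x y : nat) : R :=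
  noisy_kernel_orig theta b eps N (S x) (S y).

From Stdlib Require Import Reals Arith Lra Lia.
From Coquelicot Require Import Coquelicot.
Open Scope R_scope.

(** For fixed [N] the noisy kernel is a birth-death chain on [N^+].  Since [s_m -> 0], both
    weights equal [eps] with probability tending to one, so the up and down probabilities converge
    to [A = theta min(1, kappa lam)] and [D = (1 - theta) / max(1, kappa lam)], where
    [kappa = (1 - theta) / (2 theta)] and [lam = 1 / l <= 1] (as [eps -> 0]); hence [0 < D] and
    [A <= D / 2].

    For such a chain the reversible invariant law decays geometrically.  The gap [F_n] between the
    distribution functions of [K^n(x, .)] and of the invariant law evolves by a nonnegative
    tridiagonal operator whose adjoint contracts a weight [g] growing like [(3/2)^z], so
    [sum g |F_n|] decays like [rho^n]; total variation is at most twice [sum |F_n|]. *)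

Lemma is_series_of_partial_sums (a : nat -> R) (l : R) :
  is_lim_seq (sum_f_R0 a) l -> is_series a l.
Proof. intros H. now apply is_series_Reals, is_lim_seq_Reals. Qed.

Lemma partial_sums_of_is_series (a : nat -> R) (l : R) :
  is_series a l -> is_lim_seq (sum_f_R0 a) l.
Proof. intros H. now apply is_lim_seq_Reals, is_series_Reals. Qed.

Lemma is_series_finite_support (u : nat -> R) (M : nat) :
  (forall k, (M < k)%nat -> u k = 0) -> is_series u (sum_f_R0 u M).
Proof.
  intros Hu. apply is_series_of_partial_sums.
  apply is_lim_seq_ext_loc with (fun _ => sum_f_R0 u M); [|apply is_lim_seq_const].
  exists M. intros n Hn. induction n as [|n IH].
  - now replace M with 0%nat by lia.
  - destruct (Nat.eq_dec M (S n)) as [->|HM]; [reflexivity|].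
    rewrite tech5, <- IH, Hu by lia. ring.
Qed.

Lemma sum_f_R0_le_Series (a : nat -> R) (n : nat) :
  (forall k, 0 <= a k) -> ex_series a -> sum_f_R0 a n <= Series a.
Proof.
  intros Ha Hex.
  pose proof (partial_sums_of_is_series a _ (Series_correct a Hex)) as L.
  apply (is_lim_seq_incr_n _ n) in L.
  assert (Hle : Rbar_le (sum_f_R0 a n) (Series a)); [|exact Hle].
  apply (is_lim_seq_le (fun _ => sum_f_R0 a n) (fun k => sum_f_R0 a (k + n))); auto.
  - intros k. induction k as [|k IH]; [simpl; lra|].
    simpl. specialize (Ha (S (k + n))). lra.
  - apply is_lim_seq_const.
Qed.

Lemma Rabs_Series_le (a : nat -> R) (M : R) :
  (forall n, sum_f_R0 (fun k => Rabs (a k)) n <= M) -> Rabs (Series a) <= M.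
Proof.
  intros HM.
  assert (Hex : ex_series (fun k => Rabs (a k))).
  { destruct (ex_finite_lim_seq_incr (sum_f_R0 (fun k => Rabs (a k))) M) as [s Hs]; auto.
    - intros n. simpl. pose proof (Rabs_pos (a (S n))). lra.
    - exists s. now apply is_series_of_partial_sums. }
  eapply Rle_trans; [now apply Series_Rabs|].
  pose proof (partial_sums_of_is_series _ _ (Series_correct _ Hex)) as L.
  assert (Hle : Rbar_le (Series (fun k => Rabs (a k))) M); [|exact Hle].
  apply (is_lim_seq_le _ (fun _ => M) _ _ HM L), is_lim_seq_const.
Qed.

Lemma sum_geom_le (t : R) (n : nat) : 0 <= t < 1 -> sum_f_R0 (fun i => t ^ i) n <= / (1 - t).
Proof.
  intros Ht. rewrite tech3 by lra. pose proof (pow_le t (S n) ltac:(lra)).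
  unfold Rdiv. rewrite <- (Rmult_1_l (/ (1 - t))) at 2.
  apply Rmult_le_compat_r; [left; apply Rinv_0_lt_compat|]; lra.
Qed.

Lemma sum_f_R0_pos (u : nat -> R) (n : nat) :
  (forall k, 0 <= u k) -> 0 < u 0%nat -> 0 < sum_f_R0 u n.
Proof. intros Hu H0. induction n as [|n IH]; simpl; [exact H0|]. specialize (Hu (S n)). lra. Qed.

Lemma sum_f_R0_concentrated_at_0 (u : nat -> R) (n : nat) :
  (forall k, (1 <= k)%nat -> u k = 0) -> sum_f_R0 u n = u 0%nat.
Proof.
  intros Hu. induction n as [|n IH]; simpl; [reflexivity|].
  rewrite IH, (Hu (S n)) by lia. ring.
Qed.

Lemma ex_upper_bound_upto (f : nat -> R) (n : nat) :
  exists M, forall z, (z <= n)%nat -> f z <= M.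
Proof.
  induction n as [|n [M HM]].
  - exists (f 0%nat). intros z Hz. replace z with 0%nat by lia. lra.
  - exists (Rmax M (f (S n))). intros z Hz.
    destruct (Nat.eq_dec z (S n)) as [->|]; [apply Rmax_r|].
    eapply Rle_trans; [apply HM; lia|apply Rmax_l].
Qed.

Lemma ex_pos_lower_bound_upto (f : nat -> R) (n : nat) :
  (forall z, 0 < f z) -> exists m, 0 < m /\ forall z, (z <= n)%nat -> m <= f z.
Proof.
  intros Hf. induction n as [|n [m [Hm HM]]].
  - exists (f 0%nat). split; [apply Hf|]. intros z Hz. replace z with 0%nat by lia. lra.
  - exists (Rmin m (f (S n))). split; [now apply Rmin_glb_lt|]. intros z Hz.
    destruct (Nat.eq_dec z (S n)) as [->|]; [apply Rmin_r|].
    eapply Rle_trans; [apply Rmin_l|apply HM; lia].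
Qed.

Lemma is_lim_seq_sum_f_R0 (f : nat -> nat -> R) (L : nat -> R) (n : nat) :
  (forall k, is_lim_seq (fun x => f x k) (L k)) ->
  is_lim_seq (fun x => sum_f_R0 (f x) n) (sum_f_R0 L n).
Proof. intros H. induction n; simpl; [apply H|]. now apply is_lim_seq_plus'. Qed.

Lemma is_lim_seq_pow (u : nat -> R) (l : R) (k : nat) :
  is_lim_seq u l -> is_lim_seq (fun x => u x ^ k) (l ^ k).
Proof.
  intros H. induction k; simpl; [apply is_lim_seq_const|]. now apply is_lim_seq_mult'.
Qed.

Lemma is_lim_seq_Rmin_l (c : R) (u : nat -> R) (l : R) :
  is_lim_seq u l -> is_lim_seq (fun x => Rmin c (u x)) (Rmin c l).
Proof.
  assert (E : forall y, Rmin c y = (c + y - Rabs (c - y)) * / 2).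
  { intros y. unfold Rmin. destruct (Rle_dec c y);
      [rewrite Rabs_left1|rewrite Rabs_right]; lra. }
  intros H. rewrite E. apply is_lim_seq_ext with (fun x => (c + u x - Rabs (c - u x)) * / 2).
  { intros x. now rewrite E. }
  apply is_lim_seq_mult'; [|apply is_lim_seq_const].
  apply is_lim_seq_minus'; [apply is_lim_seq_plus'; [apply is_lim_seq_const|exact H]|].
  apply (is_lim_seq_abs (fun x => c - u x) (c - l)).
  apply is_lim_seq_minus'; [apply is_lim_seq_const|exact H].
Qed.

Lemma is_lim_seq_Rmax_l (c : R) (u : nat -> R) (l : R) :
  is_lim_seq u l -> is_lim_seq (fun x => Rmax c (u x)) (Rmax c l).
Proof.
  assert (E : forall y, Rmax c y = - Rmin (- c) (- y)).
  { intros y. unfold Rmax, Rmin. destruct (Rle_dec c y), (Rle_dec (- c) (- y)); lra. }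
  intros H. rewrite E. apply is_lim_seq_ext with (fun x => - Rmin (- c) (- u x)).
  { intros x. now rewrite E. }
  apply (is_lim_seq_opp _ (Rmin (- c) (- l))), is_lim_seq_Rmin_l.
  apply (is_lim_seq_opp u l), H.
Qed.

(** * Birth-death chains *)

(** [up x] is the probability of the step [x -> S x] and [dn y] that of [S y -> y]. *)
Definition hold (up dn : nat -> R) (y : nat) : R :=
  1 - up y - match y with O => 0 | S y' => dn y' end.

Definition bd_push (up dn u : nat -> R) (y : nat) : R :=
  match y with O => 0 | S y' => u y' * up y' end + u y * hold up dn y + u (S y) * dn y.

Lemma bd_push_minus (up dn u v : nat -> R) (y : nat) :
  bd_push up dn (fun z => u z - v z) y = bd_push up dn u y - bd_push up dn v y.
Proof. unfold bd_push. destruct y; ring. Qed.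

Lemma bd_push_balanced (up dn m : nat -> R) :
  (forall z, m (S z) * dn z = m z * up z) -> forall y, bd_push up dn m y = m y.
Proof.
  intros Hbal y. unfold bd_push, hold. destruct y as [|y].
  - rewrite Hbal. ring.
  - pose proof (Hbal y). pose proof (Hbal (S y)). nra.
Qed.

Definition cum_step (up dn H : nat -> R) (y : nat) : R :=
  (1 - up y - dn y) * H y + up y * match y with O => 0 | S y' => H y' end + dn y * H (S y).

Definition cum_step_dual (up dn g : nat -> R) (z : nat) : R :=
  up (S z) * g (S z) + (1 - up z - dn z) * g z + match z with O => 0 | S z' => dn z' * g z' end.

Lemma sum_bd_push (up dn h : nat -> R) (y : nat) :
  sum_f_R0 (bd_push up dn h) y = cum_step up dn (sum_f_R0 h) y.
Proof.
  assert (E : forall y, sum_f_R0 (bd_push up dn h) y = sum_f_R0 h y - up y * h y + dn y * h (S y)).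
  { induction y0 as [|y0 IH]; simpl; [unfold bd_push, hold; ring|].
    rewrite IH. unfold bd_push, hold. ring. }
  rewrite E. unfold cum_step. destruct y; simpl; ring.
Qed.

Lemma sum_cum_step_adjoint (up dn g F : nat -> R) (Y : nat) :
  sum_f_R0 (fun y => g y * cum_step up dn F y) Y =
  sum_f_R0 (fun z => F z * cum_step_dual up dn g z) Y
  - g (S Y) * up (S Y) * F Y + g Y * dn Y * F (S Y).
Proof.
  induction Y as [|Y IH]; simpl; [unfold cum_step, cum_step_dual; ring|].
  rewrite IH. unfold cum_step, cum_step_dual. ring.
Qed.

Section CumulativeContraction.

Variables up dn g : nat -> R.
Variable rho : R.
Hypothesis up_nonneg : forall z, 0 <= up z.
Hypothesis dn_nonneg : forall z, 0 <= dn z.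
Hypothesis up_dn_le1 : forall z, up z + dn z <= 1.
Hypothesis g_pos : forall z, 0 < g z.
Hypothesis g_drift : forall z, cum_step_dual up dn g z <= rho * g z.

Lemma Rabs_cum_step_le (H : nat -> R) (y : nat) :
  Rabs (cum_step up dn H y) <= cum_step up dn (fun z => Rabs (H z)) y.
Proof.
  unfold cum_step. pose proof (up_nonneg y). pose proof (dn_nonneg y). pose proof (up_dn_le1 y).
  eapply Rle_trans; [apply Rabs_triang|].
  eapply Rle_trans; [apply Rplus_le_compat_r, Rabs_triang|].
  rewrite !Rabs_mult, (Rabs_pos_eq (1 - up y - dn y)), (Rabs_pos_eq (up y)), (Rabs_pos_eq (dn y))
    by lra.
  destruct y; [rewrite Rabs_R0|]; lra.
Qed.

Lemma weighted_sum_cum_step_le (H : nat -> R) (Y : nat) :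
  sum_f_R0 (fun y => g y * Rabs (cum_step up dn H y)) Y <=
  rho * sum_f_R0 (fun z => g z * Rabs (H z)) (S Y).
Proof.
  eapply Rle_trans.
  { apply sum_Rle. intros y _. apply Rmult_le_compat_l; [now left|apply Rabs_cum_step_le]. }
  rewrite sum_cum_step_adjoint.
  assert (Hsum : sum_f_R0 (fun z => Rabs (H z) * cum_step_dual up dn g z) Y
                 <= rho * sum_f_R0 (fun z => g z * Rabs (H z)) Y).
  { rewrite scal_sum. apply sum_Rle. intros z _.
    pose proof (g_drift z). pose proof (Rabs_pos (H z)). nra. }
  assert (Hbdry : g Y * dn Y <= rho * g (S Y)).
  { pose proof (g_drift (S Y)) as D. unfold cum_step_dual in D.
    pose proof (up_nonneg (S (S Y))). pose proof (g_pos (S (S Y))).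
    pose proof (up_dn_le1 (S Y)). pose proof (g_pos (S Y)). nra. }
  assert (0 <= g (S Y) * up (S Y) * Rabs (H Y)).
  { pose proof (g_pos (S Y)). pose proof (up_nonneg (S Y)).
    apply Rmult_le_pos; [nra|apply Rabs_pos]. }
  assert (g Y * dn Y * Rabs (H (S Y)) <= rho * g (S Y) * Rabs (H (S Y))).
  { apply Rmult_le_compat_r; [apply Rabs_pos|exact Hbdry]. }
  simpl. lra.
Qed.

Lemma weighted_cum_bound_step (H : nat -> R) (B : R) :
  0 <= rho -> (forall Y, sum_f_R0 (fun z => g z * Rabs (H z)) Y <= B) ->
  forall Y, sum_f_R0 (fun y => g y * Rabs (cum_step up dn H y)) Y <= rho * B.
Proof.
  intros Hrho HB Y. eapply Rle_trans; [apply weighted_sum_cum_step_le|].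
  apply Rmult_le_compat_l; auto.
Qed.

End CumulativeContraction.

Lemma sum_abs_le_sum_abs_cum (h : nat -> R) (Y : nat) :
  sum_f_R0 (fun y => Rabs (h y)) Y <= 2 * sum_f_R0 (fun y => Rabs (sum_f_R0 h y)) Y.
Proof.
  assert (G : forall Y, sum_f_R0 (fun y => Rabs (h y)) Y + Rabs (sum_f_R0 h Y)
                        <= 2 * sum_f_R0 (fun y => Rabs (sum_f_R0 h y)) Y).
  { induction Y0 as [|Y0 IH]; simpl; [lra|].
    pose proof (Rabs_triang (sum_f_R0 h Y0 + h (S Y0)) (- sum_f_R0 h Y0)) as T.
    replace (sum_f_R0 h Y0 + h (S Y0) + - sum_f_R0 h Y0) with (h (S Y0)) in T by ring.
    rewrite Rabs_Ropp in T. lra. }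
  specialize (G Y). pose proof (Rabs_pos (sum_f_R0 h Y)). lra.
Qed.

Section BirthDeathChain.

Variable K : nat -> nat -> R.
Variables up dn : nat -> R.
Variable theta : R.
Hypothesis K_up : forall x, K x (S x) = up x.
Hypothesis K_dn : forall y, K (S y) y = dn y.
Hypothesis K_hold : forall x, K x x = hold up dn x.
Hypothesis K_far : forall x y, y <> S x -> x <> S y -> x <> y -> K x y = 0.
Hypothesis up_bounds : forall x, 0 < up x <= theta.
Hypothesis dn_bounds : forall x, 0 < dn x <= 1 - theta.

Lemma hold_nonneg (y : nat) : 0 <= hold up dn y.
Proof.
  unfold hold. pose proof (up_bounds y). pose proof (dn_bounds (pred y)).
  destruct y; simpl in *; lra.
Qed.

Lemma hold0_pos : 0 < hold up dn 0.
Proof. unfold hold. pose proof (up_bounds 0). pose proof (dn_bounds 0). lra. Qed.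

Lemma is_series_mul_kernel (u : nat -> R) (y : nat) :
  is_series (fun z => u z * K z y) (bd_push up dn u y).
Proof.
  replace (bd_push up dn u y) with (sum_f_R0 (fun z => u z * K z y) (S y)).
  { apply is_series_finite_support. intros k Hk. rewrite K_far by lia. ring. }
  rewrite tech5. destruct y as [|y].
  - simpl. rewrite K_hold, K_dn. unfold bd_push. ring.
  - rewrite tech5. destruct y as [|y].
    + simpl. rewrite K_up, K_hold, K_dn. unfold bd_push. ring.
    + rewrite tech5, (sum_eq _ (fun _ => 0)) by (intros; rewrite K_far by lia; ring).
      rewrite sum_cte, K_up, K_hold, K_dn. unfold bd_push. ring.
Qed.

Lemma kpow_succ (n x y : nat) : kpow K (S n) x y = bd_push up dn (kpow K n x) y.
Proof. apply is_series_unique, is_series_mul_kernel. Qed.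

Lemma bd_push_lower_bounds (u : nat -> R) (y : nat) :
  (forall z, 0 <= u z) ->
  u y * hold up dn y <= bd_push up dn u y /\ u (S y) * dn y <= bd_push up dn u y.
Proof.
  intros Hu. unfold bd_push. pose proof (hold_nonneg y). pose proof (dn_bounds y).
  pose proof (Hu y). pose proof (Hu (S y)).
  assert (0 <= match y with O => 0 | S y' => u y' * up y' end).
  { destruct y as [|y]; [lra|]. pose proof (Hu y). pose proof (up_bounds y). nra. }
  split; nra.
Qed.

Lemma kpow_nonneg (n x y : nat) : 0 <= kpow K n x y.
Proof.
  revert y. induction n as [|n IH]; intros y.
  - simpl. destruct (Nat.eqb x y); lra.
  - rewrite kpow_succ. destruct (bd_push_lower_bounds (kpow K n x) y IH).
    pose proof (IH y). pose proof (hold_nonneg y). nra.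
Qed.

Lemma kpow_descend (x n : nat) : (n <= x)%nat -> 0 < kpow K n x (x - n).
Proof.
  induction n as [|n IH]; intros Hn.
  - simpl. rewrite Nat.sub_0_r, Nat.eqb_refl. lra.
  - rewrite kpow_succ. specialize (IH ltac:(lia)).
    replace (x - n)%nat with (S (x - S n)) in IH by lia.
    destruct (bd_push_lower_bounds (kpow K n x) (x - S n) (kpow_nonneg n x)).
    pose proof (dn_bounds (x - S n)). nra.
Qed.

Lemma kpow_hit0 (x : nat) : 0 < kpow K (S x) x 0.
Proof.
  rewrite kpow_succ. pose proof (kpow_descend x x (le_n _)) as Hx.
  rewrite Nat.sub_diag in Hx.
  destruct (bd_push_lower_bounds (kpow K x x) 0 (kpow_nonneg x x)).
  pose proof hold0_pos. nra.
Qed.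

Lemma kpow_1_00 : 0 < kpow K 1 0 0.
Proof. exact (kpow_hit0 0). Qed.


Lemma is_series_mul_kernel_invariant (m : nat -> R) :
  (forall z, m (S z) * dn z = m z * up z) ->
  forall y, is_series (fun x => m x * K x y) (m y).
Proof.
  intros Hbal y. rewrite <- (bd_push_balanced up dn m Hbal y). apply is_series_mul_kernel.
Qed.

Variables A D : R.
Hypothesis D_pos : 0 < D.
Hypothesis A_le : 0 <= A <= D / 2.

(** Near infinity [up] and [dn] are within [margin] of [A] and [D]; the margin is chosen so
    that [3/2 * decay_rate < 1], i.e. the weights [(3/2)^z] used below are still beaten by
    the geometric decay of the invariant law. *)
Definition margin : R := D / 120.
Definition decay_rate : R := (A + margin) / (D - margin).

Lemma decay_rate_bounds : 0 < decay_rate /\ 3 / 2 * decay_rate < 1.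
Proof.
  unfold decay_rate, margin. split.
  - apply Rdiv_lt_0_compat; lra.
  - apply Rmult_lt_reg_r with (D - D / 120); [lra|]. field_simplify; lra.
Qed.

Section Geometric.

Variable Z : nat.
Hypothesis close_after_Z :
  forall y, (Z <= y)%nat -> Rabs (up y - A) < margin /\ Rabs (dn y - D) < margin.

Lemma D_lt_2 : D < 2.
Proof.
  destruct (close_after_Z Z (le_n _)) as [_ Hd]. apply Rabs_def2 in Hd.
  pose proof (dn_bounds Z). pose proof (up_bounds Z). unfold margin in Hd. lra.
Qed.

Lemma up_div_dn_le (z : nat) : (Z <= z)%nat -> up z / dn z <= decay_rate.
Proof.
  intros Hz. destruct (close_after_Z z Hz) as [Hu Hd].
  apply Rabs_def2 in Hu; apply Rabs_def2 in Hd.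
  unfold decay_rate, margin in *. pose proof (dn_bounds z).
  apply Rmult_le_reg_r with (dn z * (D - D / 120)); [nra|].
  field_simplify; [nra|lra|lra].
Qed.

Fixpoint bal_weight (z : nat) : R :=
  match z with O => 1 | S z' => bal_weight z' * up z' / dn z' end.

Lemma bal_weight_pos (z : nat) : 0 < bal_weight z.
Proof.
  induction z as [|z IH]; simpl; [lra|].
  pose proof (up_bounds z). pose proof (dn_bounds z). apply Rdiv_lt_0_compat; nra.
Qed.

Lemma bal_weight_balance (z : nat) : bal_weight (S z) * dn z = bal_weight z * up z.
Proof. simpl. pose proof (dn_bounds z). field. lra. Qed.

Lemma bal_weight_le_geom : exists C, forall z, bal_weight z <= C * decay_rate ^ z.
Proof.
  destruct decay_rate_bounds as [q0 _].
  destruct (ex_upper_bound_upto (fun z => bal_weight z / decay_rate ^ z) Z) as [C HC].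
  exists C. intros z. induction z as [|z IH].
  - specialize (HC 0%nat (Nat.le_0_l _)). simpl in *. lra.
  - assert (Hq : 0 < decay_rate ^ S z) by (apply pow_lt; lra).
    destruct (le_lt_dec (S z) Z) as [Hz|Hz].
    + specialize (HC (S z) Hz). simpl in HC.
      apply Rmult_le_reg_r with (/ decay_rate ^ S z); [now apply Rinv_0_lt_compat|].
      rewrite Rmult_assoc, Rinv_r by lra. simpl. lra.
    + simpl. pose proof (bal_weight_pos z). pose proof (dn_bounds z).
      pose proof (up_div_dn_le z ltac:(lia)).
      replace (bal_weight z * up z / dn z) with (bal_weight z * (up z / dn z)) by (field; lra).
      apply Rle_trans with (bal_weight z * decay_rate); [apply Rmult_le_compat_l; lra|].
      replace (C * (decay_rate * decay_rate ^ z)) with (C * decay_rate ^ z * decay_rate) by ring.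
      apply Rmult_le_compat_r; lra.
Qed.

Lemma ex_series_bal_weight : ex_series bal_weight.
Proof.
  destruct decay_rate_bounds as [q0 q1]. destruct bal_weight_le_geom as [C HC].
  apply (ex_series_le bal_weight (fun z => C * decay_rate ^ z)).
  - intros n. rewrite Rabs_pos_eq; [apply HC|left; apply bal_weight_pos].
  - exists (C * / (1 - decay_rate)).
    apply (is_series_scal_l C (fun n => decay_rate ^ n)), is_series_geom.
    rewrite Rabs_pos_eq; lra.
Qed.

Definition inv_law (z : nat) : R := bal_weight z / Series bal_weight.

Lemma Series_bal_weight_ge1 : 1 <= Series bal_weight.
Proof.
  change 1 with (sum_f_R0 bal_weight 0).
  apply sum_f_R0_le_Series; [intros k; left; apply bal_weight_pos|apply ex_series_bal_weight].
Qed.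

Lemma inv_law_nonneg (z : nat) : 0 <= inv_law z.
Proof.
  left. apply Rdiv_lt_0_compat; [apply bal_weight_pos|]. pose proof Series_bal_weight_ge1. lra.
Qed.

Lemma is_series_inv_law : is_series inv_law 1.
Proof.
  pose proof Series_bal_weight_ge1.
  replace 1 with (Series bal_weight * / Series bal_weight) by (field; lra).
  apply is_series_scal_r, Series_correct, ex_series_bal_weight.
Qed.

Lemma inv_law_balance (z : nat) : inv_law (S z) * dn z = inv_law z * up z.
Proof.
  unfold inv_law, Rdiv. rewrite Rmult_assoc, (Rmult_comm (/ _)), <- Rmult_assoc.
  rewrite bal_weight_balance. ring.
Qed.

Lemma inv_law_le_geom : exists C, forall z, inv_law z <= C * decay_rate ^ z.
Proof.
  destruct bal_weight_le_geom as [C HC]. pose proof Series_bal_weight_ge1.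
  exists (C / Series bal_weight). intros z. unfold inv_law, Rdiv.
  replace (C * / Series bal_weight * decay_rate ^ z) with (C * decay_rate ^ z * / Series bal_weight)
    by ring.
  apply Rmult_le_compat_r; [left; apply Rinv_0_lt_compat; lra|apply HC].
Qed.

Lemma inv_law_tail :
  exists T, 0 <= T /\ forall z, 0 <= 1 - sum_f_R0 inv_law z <= T * decay_rate ^ z.
Proof.
  destruct decay_rate_bounds as [q0 q1]. destruct inv_law_le_geom as [C HC].
  assert (Hex : ex_series inv_law) by (exists 1; apply is_series_inv_law).
  assert (HC0 : 0 <= C).
  { specialize (HC 0%nat). pose proof (inv_law_nonneg 0). simpl in HC. lra. }
  exists (C * decay_rate / (1 - decay_rate)).
  split; [apply Rdiv_le_0_compat; nra|]. intros z.
  pose proof (Series_incr_n inv_law (S z) ltac:(lia) Hex) as E. simpl pred in E.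
  rewrite (is_series_unique _ _ is_series_inv_law) in E.
  set (tail := fun k => inv_law (S z + k)%nat) in E.
  assert (Hgeom : is_series (fun k => C * decay_rate ^ S z * decay_rate ^ k)
                            (C * decay_rate ^ S z * / (1 - decay_rate))).
  { apply (is_series_scal_l _ (fun k => decay_rate ^ k)), is_series_geom.
    rewrite Rabs_pos_eq; lra. }
  assert (Hup : Series tail <= C * decay_rate ^ S z * / (1 - decay_rate)).
  { rewrite <- (is_series_unique _ _ Hgeom). apply Series_le; [|eexists; exact Hgeom].
    intros k. split; [apply inv_law_nonneg|]. rewrite Rmult_assoc, <- pow_add. apply HC. }
  assert (Hlow : 0 <= Series tail).
  { eapply Rle_trans; [apply (inv_law_nonneg (S z + 0))|].
    apply (sum_f_R0_le_Series tail 0); [intros k; apply inv_law_nonneg|].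
    now apply (ex_series_incr_n inv_law (S z)). }
  replace (C * decay_rate / (1 - decay_rate) * decay_rate ^ z)
    with (C * decay_rate ^ S z * / (1 - decay_rate)) by (simpl; field; lra).
  lra.
Qed.

Lemma sum_f_R0_indicator (x z : nat) :
  sum_f_R0 (fun w => if Nat.eqb x w then 1 else 0) z = if Nat.leb x z then 1 else 0.
Proof.
  induction z as [|z IH]; simpl.
  - destruct x; reflexivity.
  - rewrite IH. destruct (Nat.leb_spec x z), (Nat.eqb_spec x (S z)), (Nat.leb_spec x (S z));
      try lia; lra.
Qed.

(** For [x <= z] the gap is the tail of [inv_law] beyond [z]; for [z < x] it is at most [1]. *)
Lemma cdf_discrepancy_le :
  exists Cb, 0 <= Cb /\ forall x z,
    Rabs (sum_f_R0 (fun w => (if Nat.eqb x w then 1 else 0) - inv_law w) z)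
      <= Cb * (/ decay_rate) ^ x * decay_rate ^ z.
Proof.
  destruct decay_rate_bounds as [q0 q1]. destruct inv_law_tail as [T [HT0 HT]].
  assert (Hinv : 1 <= / decay_rate) by (rewrite <- Rinv_1; apply Rinv_le_contravar; lra).
  exists (1 + T). split; [lra|]. intros x z.
  rewrite minus_sum, sum_f_R0_indicator.
  pose proof (HT z). pose proof (cond_pos_sum inv_law z inv_law_nonneg).
  assert (0 <= decay_rate ^ z) by (apply pow_le; lra).
  assert (1 <= (/ decay_rate) ^ x) by (now apply pow_R1_Rle).
  destruct (Nat.leb_spec x z) as [Hxz|Hxz].
  - rewrite Rabs_pos_eq by lra. nra.
  - assert (Hpow : 1 <= (/ decay_rate) ^ x * decay_rate ^ z).
    { replace x with ((x - z) + z)%nat by lia.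
      rewrite pow_add, Rmult_assoc, <- Rpow_mult_distr, Rinv_l, pow1, Rmult_1_r by lra.
      now apply pow_R1_Rle. }
    rewrite Rabs_left1 by lra. rewrite Rmult_assoc. nra.
Qed.

Definition kap : R := up 0 / INR (Z + 2).

(** Below [Z] the weights solve the flux equation [drift_weight_flux], which makes the dual drift
    equal to [g z - kap] there ([kap] is what makes it hold at [z = 0] with [g 0 = 1]);
    beyond [Z] they grow by the factor [3/2], which the downward drift [D > 2 A] absorbs. *)
Fixpoint drift_weight (z : nat) : R :=
  match z with
  | O => 1
  | S z' =>
    if Nat.ltb z' Z then (dn z' * drift_weight z' + kap * (INR Z + 1 - INR z')) / up (S z')
    else 3 / 2 * drift_weight z'
  end.

Lemma kap_pos : 0 < kap.
Proof.
  unfold kap. pose proof (up_bounds 0). apply Rdiv_lt_0_compat; [lra|]. apply lt_0_INR. lia.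
Qed.

Lemma drift_weight_pos (z : nat) : 0 < drift_weight z.
Proof.
  induction z as [|z IH]; simpl; [lra|]. destruct (Nat.ltb_spec z Z) as [Hz|Hz]; [|lra].
  pose proof (dn_bounds z). pose proof (up_bounds (S z)). pose proof kap_pos.
  assert (INR z <= INR Z) by (apply le_INR; lia).
  apply Rdiv_lt_0_compat; [nra|lra].
Qed.

Lemma drift_weight_succ_ge (z : nat) :
  (Z <= z)%nat -> drift_weight (S z) = 3 / 2 * drift_weight z.
Proof. intros Hz. simpl. destruct (Nat.ltb_spec z Z); [lia|reflexivity]. Qed.

Lemma drift_weight_flux (z : nat) :
  (z <= Z)%nat ->
  up z * drift_weight z
  = match z with O => 0 | S z' => dn z' * drift_weight z' end + kap * (INR Z + 2 - INR z).
Proof.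
  intros Hz. destruct z as [|z].
  - simpl. unfold kap. rewrite plus_INR. simpl. field. pose proof (pos_INR Z). lra.
  - rewrite S_INR. cbn [drift_weight]. destruct (Nat.ltb_spec z Z); [|lia].
    pose proof (up_bounds (S z)). field. lra.
Qed.

Lemma cum_step_dual_below_Z (z : nat) :
  (z < Z)%nat -> cum_step_dual up dn drift_weight z = drift_weight z - kap.
Proof.
  intros Hz. unfold cum_step_dual.
  rewrite (drift_weight_flux (S z)) by lia.
  pose proof (drift_weight_flux z ltac:(lia)) as Fz.
  rewrite S_INR. destruct z; lra.
Qed.

Lemma cum_step_dual_at_Z : cum_step_dual up dn drift_weight Z <= drift_weight Z - kap.
Proof.
  unfold cum_step_dual. rewrite drift_weight_succ_ge by lia.
  pose proof (drift_weight_flux Z (le_n _)) as FZ.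
  destruct (close_after_Z Z (le_n _)) as [_ Hd].
  destruct (close_after_Z (S Z) ltac:(lia)) as [Hu _].
  apply Rabs_def2 in Hd; apply Rabs_def2 in Hu. unfold margin in *.
  pose proof (drift_weight_pos Z). pose proof kap_pos.
  assert (drift_weight Z * (3 / 2 * up (S Z) - dn Z) <= 0) by nra.
  destruct Z; lra.
Qed.

Lemma cum_step_dual_above_Z (z : nat) :
  (Z < z)%nat -> cum_step_dual up dn drift_weight z <= (1 - D / 24) * drift_weight z.
Proof.
  intros Hz. destruct z as [|z]; [lia|]. unfold cum_step_dual.
  rewrite (drift_weight_succ_ge (S z)), (drift_weight_succ_ge z) by lia.
  destruct (close_after_Z z ltac:(lia)) as [_ Hd0].
  destruct (close_after_Z (S z) ltac:(lia)) as [Hu1 Hd1].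
  destruct (close_after_Z (S (S z)) ltac:(lia)) as [Hu2 _].
  apply Rabs_def2 in Hd0; apply Rabs_def2 in Hd1; apply Rabs_def2 in Hu1; apply Rabs_def2 in Hu2.
  unfold margin in *.
  assert (9 / 4 * up (S (S z)) + 3 / 2 * (1 - up (S z) - dn (S z)) + dn z
          <= (1 - D / 24) * (3 / 2)) by lra.
  pose proof (drift_weight_pos z). nra.
Qed.

Lemma drift_weight_contraction :
  exists rho, 0 <= rho < 1 /\
    forall z, cum_step_dual up dn drift_weight z <= rho * drift_weight z.
Proof.
  destruct (ex_upper_bound_upto drift_weight Z) as [G HG].
  assert (G1 : 1 <= G) by (apply (HG 0%nat); lia).
  pose proof kap_pos. pose proof D_lt_2.
  set (dl := Rmin (kap / G) (D / 24)).
  assert (dl_pos : 0 < dl) by (apply Rmin_glb_lt; [apply Rdiv_lt_0_compat|]; lra).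
  assert (dl_le : dl <= D / 24) by apply Rmin_r.
  assert (dl_kap : forall z, (z <= Z)%nat -> dl * drift_weight z <= kap).
  { intros z Hz. pose proof (HG z Hz). pose proof (drift_weight_pos z).
    apply Rle_trans with (kap / G * drift_weight z); [apply Rmult_le_compat_r; [lra|apply Rmin_l]|].
    unfold Rdiv. rewrite Rmult_assoc. rewrite <- (Rmult_1_r kap) at 2.
    apply Rmult_le_compat_l; [lra|]. apply Rmult_le_reg_l with G; [lra|].
    rewrite <- Rmult_assoc, Rinv_r by lra. lra. }
  exists (1 - dl). split; [lra|]. intros z.
  destruct (lt_eq_lt_dec z Z) as [[Hz| ->]|Hz].
  - rewrite cum_step_dual_below_Z by exact Hz. pose proof (dl_kap z ltac:(lia)). lra.
  - pose proof cum_step_dual_at_Z. pose proof (dl_kap Z (le_n _)). lra.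
  - pose proof (cum_step_dual_above_Z z Hz). pose proof (drift_weight_pos z). nra.
Qed.

Lemma drift_weight_lower : exists m, 0 < m /\ forall z, m <= drift_weight z.
Proof.
  destruct (ex_pos_lower_bound_upto drift_weight Z drift_weight_pos) as [m [Hm HmZ]].
  exists m. split; [exact Hm|]. intros z. induction z as [|z IH]; [apply HmZ; lia|].
  destruct (le_lt_dec (S z) Z); [apply HmZ; lia|].
  rewrite drift_weight_succ_ge by lia. pose proof (drift_weight_pos z). lra.
Qed.

Lemma drift_weight_upper : exists G, 0 <= G /\ forall z, drift_weight z <= G * (3 / 2) ^ z.
Proof.
  destruct (ex_upper_bound_upto drift_weight Z) as [G HG].
  assert (G1 : 1 <= G) by (apply (HG 0%nat); lia).
  exists G. split; [lra|]. intros z. induction z as [|z IH]; [simpl; lra|].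
  destruct (le_lt_dec (S z) Z).
  - apply Rle_trans with G; [apply HG; lia|].
    rewrite <- (Rmult_1_r G) at 1. apply Rmult_le_compat_l; [lra|]. apply pow_R1_Rle; lra.
  - rewrite drift_weight_succ_ge by lia. simpl. lra.
Qed.

Definition cdf_gap (x n z : nat) : R := sum_f_R0 (fun y => kpow K n x y - inv_law y) z.

Lemma cdf_gap_succ (x n z : nat) : cdf_gap x (S n) z = cum_step up dn (cdf_gap x n) z.
Proof.
  unfold cdf_gap. rewrite <- sum_bd_push. apply sum_eq. intros y _.
  rewrite bd_push_minus, kpow_succ, (bd_push_balanced up dn inv_law inv_law_balance).
  reflexivity.
Qed.

Lemma weighted_cdf_gap_init :
  exists C, 0 <= C /\ forall x Y,
    sum_f_R0 (fun z => drift_weight z * Rabs (cdf_gap x 0 z)) Y <= C * (/ decay_rate) ^ x.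
Proof.
  destruct decay_rate_bounds as [q0 q1].
  destruct cdf_discrepancy_le as [Cb [HCb0 HCb]]. destruct drift_weight_upper as [G [HG0 HG]].
  set (t := 3 / 2 * decay_rate).
  exists (G * Cb / (1 - t)). split; [apply Rdiv_le_0_compat; unfold t; nra|]. intros x Y.
  assert (Hx : 0 <= (/ decay_rate) ^ x) by (apply pow_le; left; apply Rinv_0_lt_compat; lra).
  apply Rle_trans with (sum_f_R0 (fun z => G * Cb * (/ decay_rate) ^ x * t ^ z) Y).
  - apply sum_Rle. intros z _. unfold cdf_gap, t. rewrite Rpow_mult_distr.
    pose proof (HCb x z) as Hz. simpl kpow in Hz |- *.
    apply Rle_trans with (G * (3 / 2) ^ z * (Cb * (/ decay_rate) ^ x * decay_rate ^ z)).
    + apply Rmult_le_compat; [left; apply drift_weight_pos|apply Rabs_pos|apply HG|exact Hz].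
    + right. ring.
  - rewrite <- (sum_eq (fun z => t ^ z * (G * Cb * (/ decay_rate) ^ x))) by (intros; ring).
    rewrite <- scal_sum.
    replace (G * Cb / (1 - t) * (/ decay_rate) ^ x) with (G * Cb * (/ decay_rate) ^ x * / (1 - t))
      by (unfold Rdiv; ring).
    apply Rmult_le_compat_l; [apply Rmult_le_pos; [apply Rmult_le_pos|]; lra|].
    apply sum_geom_le. unfold t. lra.
Qed.

Lemma weighted_cdf_gap_le :
  exists rho C, 0 <= rho < 1 /\ forall x n Y,
    sum_f_R0 (fun z => drift_weight z * Rabs (cdf_gap x n z)) Y
      <= rho ^ n * (C * (/ decay_rate) ^ x).
Proof.
  destruct drift_weight_contraction as [rho [Hrho Hdrift]].
  destruct weighted_cdf_gap_init as [C [_ HC]].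
  exists rho, C. split; [exact Hrho|]. intros x n. induction n as [|n IH]; intros Y.
  - rewrite pow_O, Rmult_1_l. apply HC.
  - rewrite <- (sum_eq (fun z => drift_weight z * Rabs (cum_step up dn (cdf_gap x n) z)))
      by (intros; now rewrite cdf_gap_succ).
    rewrite <- tech_pow_Rmult, Rmult_assoc.
    apply (weighted_cum_bound_step up dn drift_weight rho); try lra; auto.
    + intros z. pose proof (up_bounds z). lra.
    + intros z. pose proof (dn_bounds z). lra.
    + intros z. pose proof (up_bounds z). pose proof (dn_bounds z). lra.
    + exact drift_weight_pos.
Qed.

Lemma tv_convergence :
  exists (V : nat -> R) (tau Rc : R),
    (forall x, 1 <= V x) /\ 0 <= tau /\ tau < 1 /\
    forall (x n : nat) (E : nat -> bool),
      Rabs (Series (fun y => if E y then kpow K n x y - inv_law y else 0)) <= Rc * V x * tau ^ n.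
Proof.
  destruct decay_rate_bounds as [q0 q1].
  destruct weighted_cdf_gap_le as [rho [C [Hrho HC]]].
  destruct drift_weight_lower as [m [Hm0 Hm]].
  exists (fun x => (/ decay_rate) ^ x), rho, (2 / m * C). split; [|split; [lra|split; [lra|]]].
  { intros x. apply pow_R1_Rle. rewrite <- Rinv_1. apply Rinv_le_contravar; lra. }
  intros x n E. apply Rabs_Series_le. intros Y.
  eapply Rle_trans.
  { apply (sum_Rle _ (fun y => Rabs (kpow K n x y - inv_law y))). intros y _.
    destruct (E y); [lra|]. rewrite Rabs_R0. apply Rabs_pos. }
  eapply Rle_trans; [apply sum_abs_le_sum_abs_cum|].
  change (sum_f_R0 (fun z => Rabs (sum_f_R0 (fun y => kpow K n x y - inv_law y) z)) Y)
    with (sum_f_R0 (fun z => Rabs (cdf_gap x n z)) Y).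
  apply Rle_trans with (2 * (/ m * sum_f_R0 (fun z => drift_weight z * Rabs (cdf_gap x n z)) Y)).
  - apply Rmult_le_compat_l; [lra|]. rewrite scal_sum. apply sum_Rle. intros z _.
    replace (Rabs (cdf_gap x n z)) with (m * Rabs (cdf_gap x n z) * / m) at 1 by (field; lra).
    apply Rmult_le_compat_r; [left; apply Rinv_0_lt_compat; lra|].
    apply Rmult_le_compat_r; [apply Rabs_pos|apply Hm].
  - pose proof (HC x n Y). assert (0 < / m) by (apply Rinv_0_lt_compat; lra).
    unfold Rdiv. nra.
Qed.

End Geometric.

Theorem birth_death_geometrically_ergodic :
  is_lim_seq up A -> is_lim_seq dn D -> geometrically_ergodic K.
Proof.
  intros Hup Hdn.
  assert (Hm : 0 < margin) by (unfold margin; lra).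
  apply is_lim_seq_spec in Hup, Hdn.
  destruct (Hup (mkposreal _ Hm)) as [Z1 H1], (Hdn (mkposreal _ Hm)) as [Z2 H2].
  assert (Hclose : forall y, (Z1 + Z2 <= y)%nat ->
                     Rabs (up y - A) < margin /\ Rabs (dn y - D) < margin)
    by (intros y Hy; split; [apply H1|apply H2]; lia).
  exists (fun y => if Nat.eqb y 0 then 1 else 0).
  split; [intros y; destruct (Nat.eqb y 0); lra|].
  split; [exists 0%nat; simpl; lra|].
  split.
  { intros x [|y] Hy; [|simpl in Hy; lra]. exists (S x). split; [lia|apply kpow_hit0]. }
  split.
  { intros [|y] Hy d Hd; [|simpl in Hy; lra]. exists 1%nat.
    split; [lia|split; [apply kpow_1_00|rewrite Nat.mod_small; lia]]. }
  exists inv_law.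
  split; [exact (inv_law_nonneg _ Hclose)|]. split; [exact (is_series_inv_law _ Hclose)|].
  split; [exact (is_series_mul_kernel_invariant inv_law inv_law_balance)|].
  exact (tv_convergence _ Hclose).
Qed.

End BirthDeathChain.

(** * The noisy Metropolis-Hastings kernel *)

Section NoisyKernel.

Variables (theta : R) (b eps : nat -> R) (N : nat).

Definition noisy_up (x : nat) : R := theta * accept theta b eps N (S x) (S (S x)).
Definition noisy_dn (y : nat) : R := (1 - theta) * accept theta b eps N (S (S y)) (S y).

Lemma qprop_up (m : nat) : qprop theta m (S m) = theta.
Proof. unfold qprop. now rewrite Nat.eqb_refl. Qed.

Lemma qprop_dn (m : nat) : qprop theta (S m) m = 1 - theta.
Proof.
  unfold qprop. destruct (Nat.eqb_spec m (S (S m))); [lia|]. now rewrite Nat.eqb_refl.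
Qed.

Lemma noisy_kernel_up (x : nat) : noisy_kernel theta b eps N x (S x) = noisy_up x.
Proof. unfold noisy_kernel, noisy_kernel_orig, noisy_up. now rewrite Nat.eqb_refl, qprop_up. Qed.

Lemma noisy_kernel_dn (y : nat) : noisy_kernel theta b eps N (S y) y = noisy_dn y.
Proof.
  unfold noisy_kernel, noisy_kernel_orig, noisy_dn.
  destruct (Nat.eqb_spec (S y) (S (S (S y)))); [lia|].
  simpl Nat.leb. simpl pred. rewrite Nat.eqb_refl. simpl andb. now rewrite qprop_dn.
Qed.

Lemma noisy_kernel_hold (x : nat) :
  noisy_kernel theta b eps N x x = hold noisy_up noisy_dn x.
Proof.
  unfold noisy_kernel, noisy_kernel_orig, hold.
  destruct (Nat.eqb_spec (S x) (S (S x))); [lia|]. rewrite Nat.eqb_refl.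
  destruct x as [|x].
  - simpl. rewrite qprop_up. unfold noisy_up. ring.
  - simpl Nat.leb. simpl pred. destruct (Nat.eqb_spec (S (S x)) (S x)); [lia|]. simpl andb.
    rewrite qprop_up, qprop_dn. unfold noisy_up, noisy_dn. ring.
Qed.

Lemma noisy_kernel_far (x y : nat) :
  y <> S x -> x <> S y -> x <> y -> noisy_kernel theta b eps N x y = 0.
Proof.
  intros H1 H2 H3. unfold noisy_kernel, noisy_kernel_orig.
  destruct x as [|x]; simpl;
  repeat match goal with |- context [Nat.eqb ?a ?b] => destruct (Nat.eqb_spec a b); try lia end;
  reflexivity.
Qed.

Hypothesis theta_bounds : 0 < theta < 1.
Hypothesis b_gt1 : forall m : nat, (1 <= m)%nat -> 1 < b m.
Hypothesis eps_bounds : forall m : nat, (1 <= m)%nat -> 0 < eps m <= 1.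
Hypothesis N_pos : (1 <= N)%nat.

Definition accept_with (m y : nat) (c : R) : R :=
  sum_f_R0 (fun k => sum_f_R0 (fun j =>
    wprob b eps N m k * wprob b eps N y j
    * Rmin 1 (c * (wval b eps N y j / wval b eps N m k))) N) N.

Lemma s_par_bounds (m : nat) : (1 <= m)%nat -> 0 <= s_par b eps m < 1.
Proof.
  intros Hm. unfold s_par. pose proof (b_gt1 m Hm). pose proof (eps_bounds m Hm). split.
  - apply Rdiv_le_0_compat; lra.
  - apply Rmult_lt_reg_r with (b m - eps m); [lra|]. field_simplify; lra.
Qed.

Lemma wprob_nonneg (m k : nat) : (1 <= m)%nat -> 0 <= wprob b eps N m k.
Proof.
  intros Hm. pose proof (s_par_bounds m Hm). unfold wprob, binomR, Binomial.C.
  apply Rmult_le_pos; [apply Rmult_le_pos|apply pow_le; lra]; [|apply pow_le; lra].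
  apply Rdiv_le_0_compat; [apply pos_INR|].
  apply Rmult_lt_0_compat; apply lt_0_INR, lt_O_fact.
Qed.

Lemma binomR_0 (n : nat) : binomR n 0 = 1.
Proof.
  unfold binomR, Binomial.C. rewrite Nat.sub_0_r. simpl.
  pose proof (INR_fact_neq_0 n). field. auto.
Qed.

Lemma wprob0_pos (m : nat) : (1 <= m)%nat -> 0 < wprob b eps N m 0.
Proof.
  intros Hm. pose proof (s_par_bounds m Hm). unfold wprob.
  rewrite binomR_0, pow_O, Nat.sub_0_r, !Rmult_1_l. apply pow_lt. lra.
Qed.

Lemma wprob_sum (m : nat) : (1 <= m)%nat -> sum_f_R0 (wprob b eps N m) N = 1.
Proof.
  intros Hm. unfold wprob, binomR. rewrite <- Binomial.binomial.
  replace (s_par b eps m + (1 - s_par b eps m)) with 1 by ring. apply pow1.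
Qed.

Lemma wval_pos (m k : nat) : (1 <= m)%nat -> 0 < wval b eps N m k.
Proof.
  intros Hm. unfold wval. pose proof (b_gt1 m Hm). pose proof (eps_bounds m Hm).
  assert (0 < INR N) by (apply lt_0_INR; lia).
  pose proof (pos_INR k).
  assert (0 <= (b m - eps m) / INR N) by (apply Rdiv_le_0_compat; lra). nra.
Qed.

Lemma accept_term_bounds (m y k j : nat) (c : R) :
  (1 <= m)%nat -> (1 <= y)%nat -> 0 < c ->
  0 < Rmin 1 (c * (wval b eps N y j / wval b eps N m k)) <= 1 /\
  0 <= wprob b eps N m k * wprob b eps N y j *
         Rmin 1 (c * (wval b eps N y j / wval b eps N m k))
    <= wprob b eps N m k * wprob b eps N y j.
Proof.
  intros Hm Hy Hc. pose proof (wval_pos y j Hy). pose proof (wval_pos m k Hm).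
  pose proof (wprob_nonneg m k Hm). pose proof (wprob_nonneg y j Hy).
  assert (Hmin : 0 < Rmin 1 (c * (wval b eps N y j / wval b eps N m k)) <= 1).
  { split; [|apply Rmin_l]. apply Rmin_glb_lt; [lra|].
    apply Rmult_lt_0_compat; [lra|]. apply Rdiv_lt_0_compat; lra. }
  split; [exact Hmin|].
  assert (0 <= wprob b eps N m k * wprob b eps N y j) by (apply Rmult_le_pos; lra).
  split; nra.
Qed.

Lemma accept_with_bounds (m y : nat) (c : R) :
  (1 <= m)%nat -> (1 <= y)%nat -> 0 < c -> 0 < accept_with m y c <= 1.
Proof.
  intros Hm Hy Hc. unfold accept_with.
  pose proof (fun k j => accept_term_bounds m y k j c Hm Hy Hc) as T.
  split.
  - apply sum_f_R0_pos; [intros k; apply cond_pos_sum; intros j; apply (T k j)|].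
    apply sum_f_R0_pos; [intros j; apply (T 0%nat j)|].
    destruct (T 0%nat 0%nat) as [Hmin _].
    pose proof (wprob0_pos m Hm). pose proof (wprob0_pos y Hy).
    apply Rmult_lt_0_compat; [apply Rmult_lt_0_compat|]; lra.
  - apply Rle_trans with (sum_f_R0 (fun k => wprob b eps N m k * sum_f_R0 (wprob b eps N y) N) N).
    + apply sum_Rle. intros k _. rewrite scal_sum. apply sum_Rle. intros j _.
      destruct (T k j) as [_ Hkj]. lra.
    + rewrite wprob_sum, (sum_eq _ (wprob b eps N m)), wprob_sum by (auto; intros; ring).
      lra.
Qed.

Definition kappa : R := (1 - theta) / (2 * theta).

Lemma kappa_pos : 0 < kappa.
Proof. unfold kappa. apply Rdiv_lt_0_compat; lra. Qed.

(** [pi(m+1) / pi(m) = 1/2], so the ratio of an upward move is [(1 - theta) / (2 theta)]. *)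
Lemma accept_up (x : nat) :
  accept theta b eps N (S x) (S (S x)) = accept_with (S x) (S (S x)) kappa.
Proof.
  unfold accept, accept_with.
  replace (pi_target (S (S x)) * qprop theta (S (S x)) (S x)
           / (pi_target (S x) * qprop theta (S x) (S (S x)))) with kappa; [reflexivity|].
  rewrite qprop_up, qprop_dn. unfold pi_target, kappa. simpl Nat.leb. cbv iota.
  change ((1 / 2) ^ S (S x)) with (1 / 2 * (1 / 2) ^ S x).
  assert (0 < (1 / 2) ^ S x) by (apply pow_lt; lra). field. lra.
Qed.

Lemma accept_dn (x : nat) :
  accept theta b eps N (S (S x)) (S x) = accept_with (S (S x)) (S x) (/ kappa).
Proof.
  unfold accept, accept_with.
  replace (pi_target (S x) * qprop theta (S x) (S (S x))
           / (pi_target (S (S x)) * qprop theta (S (S x)) (S x))) with (/ kappa); [reflexivity|].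
  rewrite qprop_up, qprop_dn. unfold pi_target, kappa. simpl Nat.leb. cbv iota.
  change ((1 / 2) ^ S (S x)) with (1 / 2 * (1 / 2) ^ S x).
  assert (0 < (1 / 2) ^ S x) by (apply pow_lt; lra). field. lra.
Qed.

Lemma noisy_up_bounds (x : nat) : 0 < noisy_up x <= theta.
Proof.
  unfold noisy_up. rewrite accept_up.
  pose proof (accept_with_bounds (S x) (S (S x)) kappa ltac:(lia) ltac:(lia) kappa_pos).
  split; [apply Rmult_lt_0_compat|]; nra.
Qed.

Lemma noisy_dn_bounds (x : nat) : 0 < noisy_dn x <= 1 - theta.
Proof.
  unfold noisy_dn. rewrite accept_dn.
  pose proof (accept_with_bounds (S (S x)) (S x) (/ kappa) ltac:(lia) ltac:(lia)
                (Rinv_0_lt_compat _ kappa_pos)).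
  split; [apply Rmult_lt_0_compat|]; nra.
Qed.

Lemma s_par_lim (mm : nat -> nat) :
  is_lim_seq (fun x => b (mm x)) p_infty -> is_lim_seq (fun x => eps (mm x)) 0 ->
  is_lim_seq (fun x => s_par b eps (mm x)) 0.
Proof.
  intros Hb Heps. unfold s_par.
  assert (L : is_lim_seq (fun x => b (mm x) - eps (mm x)) p_infty)
    by (apply (is_lim_seq_minus _ _ p_infty 0 p_infty Hb Heps); reflexivity).
  apply is_lim_seq_inv in L; [|discriminate]. simpl in L.
  replace (Finite 0) with (Finite ((1 - 0) * 0)) by (f_equal; ring).
  apply is_lim_seq_mult'; [|exact L].
  apply is_lim_seq_minus'; [apply is_lim_seq_const|exact Heps].
Qed.

Definition ind0 (k : nat) : R := if Nat.eqb k 0 then 1 else 0.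

Lemma wprob_lim (mm : nat -> nat) (k : nat) :
  is_lim_seq (fun x => s_par b eps (mm x)) 0 ->
  is_lim_seq (fun x => wprob b eps N (mm x) k) (ind0 k).
Proof.
  intros Hs. unfold wprob.
  replace (ind0 k) with (binomR N k * 0 ^ k * (1 - 0) ^ (N - k)).
  - apply is_lim_seq_mult'; [apply is_lim_seq_mult'; [apply is_lim_seq_const|]|].
    + now apply is_lim_seq_pow.
    + apply is_lim_seq_pow, is_lim_seq_minus'; [apply is_lim_seq_const|exact Hs].
  - unfold ind0. destruct k; simpl; [|ring].
    rewrite binomR_0, Rminus_0_r, pow1. ring.
Qed.

(** As [s_m -> 0], both weights are [eps] with probability tending to [1]. *)
Lemma accept_with_lim (mm yy : nat -> nat) (c L : R) :
  (forall x, (1 <= mm x)%nat) -> (forall x, (1 <= yy x)%nat) -> 0 < c ->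
  is_lim_seq (fun x => s_par b eps (mm x)) 0 -> is_lim_seq (fun x => s_par b eps (yy x)) 0 ->
  is_lim_seq (fun x => Rmin 1 (c * (eps (yy x) / eps (mm x)))) L ->
  is_lim_seq (fun x => accept_with (mm x) (yy x) c) L.
Proof.
  intros Hm Hy Hc Sm Sy HL. unfold accept_with.
  replace L with (sum_f_R0 (fun k => sum_f_R0 (fun j => ind0 k * ind0 j * L) N) N).
  2:{ rewrite sum_f_R0_concentrated_at_0.
      - rewrite sum_f_R0_concentrated_at_0; [unfold ind0; simpl; ring|].
        intros j Hj. unfold ind0. destruct j; [lia|]. simpl. ring.
      - intros k Hk. rewrite sum_f_R0_concentrated_at_0.
        + unfold ind0. destruct k; [lia|]. simpl. ring.
        + intros j Hj. unfold ind0. destruct j; [lia|]. simpl. ring. }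
  apply is_lim_seq_sum_f_R0. intros k. apply is_lim_seq_sum_f_R0. intros j.
  assert (Hprod : is_lim_seq (fun x => wprob b eps N (mm x) k * wprob b eps N (yy x) j)
                             (ind0 k * ind0 j))
    by (apply is_lim_seq_mult'; now apply wprob_lim).
  assert (Hcase : (k = 0 /\ j = 0)%nat \/ ind0 k * ind0 j = 0).
  { unfold ind0. destruct k, j; simpl; auto; right; ring. }
  destruct Hcase as [[-> ->]|H0].
  - apply is_lim_seq_ext with (fun x => wprob b eps N (mm x) 0 * wprob b eps N (yy x) 0 *
                                         Rmin 1 (c * (eps (yy x) / eps (mm x)))).
    { intros x. unfold wval. simpl INR. f_equal. f_equal. f_equal. f_equal; ring. }
    now apply is_lim_seq_mult'.
  - rewrite H0 in Hprod. rewrite H0, Rmult_0_l.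
    apply is_lim_seq_le_le with
      (fun _ => 0) (fun x => wprob b eps N (mm x) k * wprob b eps N (yy x) j);
      [intros x; apply (accept_term_bounds _ _ _ _ c (Hm x) (Hy x) Hc)
      |apply is_lim_seq_const|exact Hprod].
Qed.

Lemma Rmin_1_inv (u : R) : 0 < u -> Rmin 1 (/ u) = / Rmax 1 u.
Proof.
  intros Hu. unfold Rmin, Rmax.
  destruct (Rle_dec 1 (/ u)) as [H1|H1], (Rle_dec 1 u) as [H2|H2].
  - assert (u = 1) as ->; [|now rewrite Rinv_1].
    apply Rle_antisym; [|exact H2]. rewrite <- (Rinv_inv u), <- Rinv_1.
    apply Rinv_le_contravar; lra.
  - now rewrite Rinv_1.
  - reflexivity.
  - exfalso. apply H1. rewrite <- Rinv_1. apply Rinv_le_contravar; lra.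
Qed.

Section NoisyLimits.

Variable lam : R.
Hypothesis lam_nonneg : 0 <= lam.
Hypothesis b_lim : is_lim_seq b p_infty.
Hypothesis eps_lim : is_lim_seq eps 0.
Hypothesis eps_ratio_lim : is_lim_seq (fun x => eps (S (S x)) / eps (S x)) lam.

Lemma eps_succ_pos (x : nat) : 0 < eps (S x).
Proof. apply eps_bounds. lia. Qed.

Lemma s_par_succ_lim : is_lim_seq (fun x => s_par b eps (S x)) 0.
Proof.
  apply s_par_lim; [apply (is_lim_seq_incr_1 b)|apply (is_lim_seq_incr_1 eps)]; assumption.
Qed.

Lemma noisy_up_lim : is_lim_seq noisy_up (theta * Rmin 1 (kappa * lam)).
Proof.
  apply is_lim_seq_ext with (fun x => theta * accept_with (S x) (S (S x)) kappa).
  { intros x. unfold noisy_up. now rewrite accept_up. }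
  apply is_lim_seq_mult'; [apply is_lim_seq_const|].
  apply (accept_with_lim (fun x => S x) (fun x => S (S x))); try (intros; lia).
  - exact kappa_pos.
  - exact s_par_succ_lim.
  - apply (is_lim_seq_incr_1 (fun x => s_par b eps (S x))), s_par_succ_lim.
  - apply is_lim_seq_Rmin_l, is_lim_seq_mult'; [apply is_lim_seq_const|exact eps_ratio_lim].
Qed.

Lemma noisy_dn_lim : is_lim_seq noisy_dn ((1 - theta) / Rmax 1 (kappa * lam)).
Proof.
  apply is_lim_seq_ext with (fun x => (1 - theta) * accept_with (S (S x)) (S x) (/ kappa)).
  { intros x. unfold noisy_dn. now rewrite accept_dn. }
  apply is_lim_seq_mult'; [apply is_lim_seq_const|].
  pose proof kappa_pos.
  apply (accept_with_lim (fun x => S (S x)) (fun x => S x)); try (intros; lia).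
  - now apply Rinv_0_lt_compat.
  - apply (is_lim_seq_incr_1 (fun x => s_par b eps (S x))), s_par_succ_lim.
  - exact s_par_succ_lim.
  - apply is_lim_seq_ext with (fun x => / Rmax 1 (kappa * (eps (S (S x)) / eps (S x)))).
    { intros x. pose proof (eps_succ_pos x). pose proof (eps_succ_pos (S x)).
      rewrite <- Rmin_1_inv by (apply Rmult_lt_0_compat; [lra|apply Rdiv_lt_0_compat; lra]).
      f_equal. field. lra. }
    pose proof (Rmax_l 1 (kappa * lam)).
    apply (is_lim_seq_inv _ (Rmax 1 (kappa * lam))); [|simpl; intros E; injection E; lra].
    apply is_lim_seq_Rmax_l, is_lim_seq_mult'; [apply is_lim_seq_const|exact eps_ratio_lim].
Qed.

End NoisyLimits.

Lemma noisy_limits_drift (lam : R) :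
  0 <= lam <= 1 ->
  0 <= theta * Rmin 1 (kappa * lam) <= (1 - theta) / Rmax 1 (kappa * lam) / 2.
Proof.
  intros Hlam.
  assert (E : 2 * theta * (kappa * lam) = (1 - theta) * lam) by (unfold kappa; field; lra).
  assert (0 <= kappa * lam) by (pose proof kappa_pos; apply Rmult_le_pos; lra).
  set (u := kappa * lam) in *. unfold Rmin, Rmax.
  destruct (Rle_dec 1 u).
  - split; [lra|].
    replace ((1 - theta) / u / 2) with (theta + ((1 - theta) - 2 * theta * u) / (2 * u))
      by (field; lra).
    assert (0 <= ((1 - theta) - 2 * theta * u) / (2 * u)) by (apply Rdiv_le_0_compat; nra).
    lra.
  - split; [nra|]. unfold Rdiv. rewrite Rinv_1. nra.
Qed.

End NoisyKernel.

Lemma ratio_lim_inverse (u : nat -> R) (l : Rbar) :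
  (forall n, 0 < u n) -> is_lim_seq u 0 -> Rbar_lt 0 l ->
  is_lim_seq (fun n => u n / u (S n)) l ->
  exists lam, 0 <= lam <= 1 /\ is_lim_seq (fun n => u (S n) / u n) lam.
Proof.
  intros Hu Hu0 Hl Hratio.
  apply is_lim_seq_inv in Hratio;
    [|destruct l; simpl in *; try discriminate; intros E; injection E; lra].
  assert (Hinv : exists lam, Rbar_inv l = Finite lam /\ 0 <= lam).
  { destruct l as [r| |]; simpl in *; [|exists 0; split; [reflexivity|lra]|contradiction].
    exists (/ r). split; [reflexivity|]. left. now apply Rinv_0_lt_compat. }
  destruct Hinv as [lam [Elam Hlam0]]. rewrite Elam in Hratio.
  assert (Hlim : is_lim_seq (fun n => u (S n) / u n) lam).
  { apply is_lim_seq_ext with (2 := Hratio). intros n.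
    pose proof (Hu n). pose proof (Hu (S n)). field. split; lra. }
  exists lam. split; [split; [exact Hlam0|]|exact Hlim].
  destruct (Rle_dec lam 1) as [Hle|Hgt]; [exact Hle|exfalso].
  apply (not_ex_series_DAlembert u lam); [lra|intros n; pose proof (Hu n); lra| |exact Hu0].
  apply is_lim_seq_ext with (2 := Hlim). intros n.
  rewrite Rabs_pos_eq; [reflexivity|]. pose proof (Hu n). pose proof (Hu (S n)).
  left. now apply Rdiv_lt_0_compat.
Qed.

Theorem proposition3p13
  (theta : R) (b eps : nat -> R) (l : Rbar)
  (Htheta : 0 < theta < 1)
  (Hb : forall m : nat, (1 <= m)%nat -> 1 < b m)
  (Heps : forall m : nat, (1 <= m)%nat -> 0 < eps m <= 1)
  (Hb_lim : is_lim_seq b p_infty)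
  (Heps_lim : is_lim_seq eps 0)
  (Hl_pos : Rbar_lt 0 l)
  (Hratio : is_lim_seq (fun m => eps m / eps (S m)) l) :
  forall N : nat, (1 <= N)%nat ->
    geometrically_ergodic (noisy_kernel theta b eps N).
Proof.
  intros N HN.
  destruct (ratio_lim_inverse (fun n => eps (S n)) l) as [lam [Hlam Hlam_lim]];
    [intros n; apply Heps; lia|now apply (is_lim_seq_incr_1 eps)|exact Hl_pos
    |now apply (is_lim_seq_incr_1 (fun m => eps m / eps (S m)))|].
  pose proof (noisy_limits_drift theta Htheta lam Hlam) as Hdrift.
  apply (birth_death_geometrically_ergodic _ _ _ theta
           (noisy_kernel_up theta b eps N) (noisy_kernel_dn theta b eps N)
           (noisy_kernel_hold theta b eps N) (noisy_kernel_far theta b eps N)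
           (noisy_up_bounds theta b eps N Htheta Hb Heps HN)
           (noisy_dn_bounds theta b eps N Htheta Hb Heps HN)
           (theta * Rmin 1 (kappa theta * lam)) ((1 - theta) / Rmax 1 (kappa theta * lam)));
    [|exact Hdrift|now apply noisy_up_lim|now apply noisy_dn_lim].
  pose proof (Rmax_l 1 (kappa theta * lam)).
  apply Rdiv_lt_0_compat; lra.
Qed.
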